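(* Let $R\cong \prod_{i=1}^{n} D_{i}$ be a finite direct product of rings where each $D_{i}$ is either a Dedekind domain or an Artinian, local principal ideal ring (equivalently, $R$ is a multiplication ring with finitely many minimal prime ideals), and let $1=e_1+\cdots+e_n$ be the corresponding decomposition into central orthogonal idempotents. Let $M$ be an $R$-module and $M_i:=e_iM$, so $M=\bigoplus_{i=1}^n M_i$. Then $M$ is a faithful multiplication $R$-module if and only if for each $i=1,\ldots,n$, either $M_i\cong D_i$, or $D_i$ is a Dedekind domain and $M_i\cong I_i$ for some nonzero ideal $I_i$ of $D_i$.
   Context: All rings are commutative with $1$ and all modules are unital. A ring $R$ is a multiplication ring if whenever $I,J$ are ideals of $R$ with $J\subseteq I$, there is an ideal $I'$ of $R$ with $J=I'I$. An $R$-module $M$ is a multiplication module if every submodule of $M$ equals $IM$ for some ideal $I$ of $R$. $M$ is faithful if its annihilator $\mathrm{ann}_R(M)=\{r\in R: rM=0\}$ is $0$. *)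

From HB Require Import structures.
From mathcomp Require Import all_boot all_order all_algebra.
Set Implicit Arguments. Unset Strict Implicit. Unset Printing Implicit Defensive.
Import GRing.Theory.
Local Open Scope ring_scope.

Section RingNotions.
Variable A : comPzRingType.

Definition is_ideal (I : A -> Prop) : Prop :=
  [/\ I 0, (forall x y, I x -> I y -> I (x + y)) & (forall a x, I x -> I (a * x))].

Definition prime_ideal (P : A -> Prop) : Prop :=
  [/\ is_ideal P, ~ P 1 & (forall a b, P (a * b) -> P a \/ P b)].

Definition maximal_ideal (P : A -> Prop) : Prop :=
  [/\ is_ideal P, ~ P 1 &
      (forall J : A -> Prop, is_ideal J -> (forall x, P x -> J x) ->
         (forall x, J x <-> P x) \/ (forall x, J x))].

Definition nonzero_ideal (I : A -> Prop) : Prop := exists x, I x /\ x != 0.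

Definition integral_domain : Prop :=
  (1 : A) != 0 /\ forall a b : A, a * b = 0 -> a = 0 \/ b = 0.

Definition noetherian_ring : Prop :=
  forall I : nat -> A -> Prop, (forall k, is_ideal (I k)) ->
    (forall k x, I k x -> I k.+1 x) ->
    exists N, forall k, (N <= k)%N -> forall x, I k x -> I N x.

Definition artinian_ring : Prop :=
  forall I : nat -> A -> Prop, (forall k, is_ideal (I k)) ->
    (forall k x, I k.+1 x -> I k x) ->
    exists N, forall k, (N <= k)%N -> forall x, I N x -> I k x.

Definition local_ring : Prop :=
  exists m : A -> Prop, maximal_ideal m /\
    forall m', maximal_ideal m' -> forall x, m' x <-> m x.

Definition principal_ideal_ring : Prop :=
  forall I : A -> Prop, is_ideal I -> exists a, forall x, I x <-> exists r, x = r * a.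

(* Integrally closed in its field of fractions, unfolded: if a/b (b <> 0)
   is a root of a monic polynomial X^n + sum_{i<n} c_i X^i over A,
   i.e. a^n + sum_{i<n} c_i a^i b^(n-i) = 0, then a/b lies in A, i.e. b | a. *)
Definition integrally_closed : Prop :=
  forall (a b : A) (n : nat) (c : 'I_n -> A), b != 0 ->
    a ^+ n + \sum_(i < n) c i * a ^+ i * b ^+ (n - i) = 0 ->
    exists r, a = r * b.

Definition dedekind_domain : Prop :=
  [/\ integral_domain, noetherian_ring, integrally_closed &
      (forall P, prime_ideal P -> nonzero_ideal P -> maximal_ideal P)].

Definition artinian_local_pir : Prop :=
  [/\ artinian_ring, local_ring & principal_ideal_ring].

End RingNotions.

Section ModuleNotions.
Variables (R : comPzRingType) (M : lmodType R).

Definition is_submodule (N : M -> Prop) : Prop :=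
  [/\ N 0, (forall x y, N x -> N y -> N (x + y)) & (forall r x, N x -> N (r *: x))].

Definition ideal_times_module (I : R -> Prop) (x : M) : Prop :=
  exists s : seq (R * M), foldr (fun p P => I p.1 /\ P) True s /\
    x = \sum_(p <- s) p.1 *: p.2.

Definition multiplication_module : Prop :=
  forall N : M -> Prop, is_submodule N ->
    exists I : R -> Prop, is_ideal I /\ forall x, N x <-> ideal_times_module I x.

Definition faithful_module : Prop :=
  forall r : R, (forall m : M, r *: m = 0) -> r = 0.

Definition scaled_part (e : R) (x : M) : Prop := exists m : M, x = e *: m.

(* The R-submodule N of M is isomorphic (as R-module) to the ideal I of A,
   where A is an R-module via the ring morphism pi : R -> A. *)
Definition iso_to_ideal (A : comPzRingType) (pi : R -> A)
    (N : M -> Prop) (I : A -> Prop) : Prop :=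
  exists f : M -> A,
    [/\ (forall x y, N x -> N y -> f (x + y) = f x + f y),
        (forall r x, N x -> f (r *: x) = pi r * f x),
        (forall x y, N x -> N y -> f x = f y -> x = y),
        (forall x, N x -> I (f x)) &
        (forall a, I a -> exists x, N x /\ f x = a)].

End ModuleNotions.

From HB Require Import structures.
From mathcomp Require Import all_boot all_order all_algebra.
From mathcomp Require Import ring.
From Stdlib Require Import Classical ClassicalEpsilon.
From Stdlib Require Lists.List.
Set Implicit Arguments. Unset Strict Implicit. Unset Printing Implicit Defensive.
Import GRing.Theory.
Local Open Scope ring_scope.

(** The module splits along the idempotents: [e i M] is a [D i]-module, and
  [M] is a faithful multiplication module as soon as every [e i M] is isomorphic
  to an ideal of [D i] that is faithful and a multiplication ideal (every
  smaller ideal [K] is [L I]).  The unit ideal is such an ideal, and so is every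
  nonzero ideal of a Dedekind domain, because these are invertible (the
  classical argument with products of primes and the determinant trick).

  Conversely, if [M] is faithful and multiplication then [e i M <> 0].  Over a
  domain, write [R x0 = I M] with [0 <> x0] in [e i M] and pick [rho] in [I]
  with [pi i rho <> 0]; then [y |-> s] where [rho y = s x0] embeds [e i M] into
  [D i].  Over an Artinian local principal ideal ring with maximal ideal [(t)],
  [t] is nilpotent, so [e i M <> t (e i M)]; an element outside [t (e i M)]
  generates [e i M], which is then free of rank one by faithfulness. *)

Section Ideals.
Variable A : comPzRingType.
Implicit Types (I J K P : A -> Prop) (a b c x y : A).

Lemma ideal0 I : is_ideal I -> I 0.
Proof. by case. Qed.

Lemma idealD I x y : is_ideal I -> I x -> I y -> I (x + y).
Proof. by case=> _ h _; apply: h. Qed.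

Lemma idealMl I a x : is_ideal I -> I x -> I (a * x).
Proof. by case=> _ _ h; apply: h. Qed.

Lemma idealMr I a x : is_ideal I -> I x -> I (x * a).
Proof. by move=> hI hx; rewrite mulrC; apply: idealMl. Qed.

Lemma ideal1 I : is_ideal I -> I 1 -> forall x, I x.
Proof. by move=> hI h1 x; rewrite -[x]mulr1; apply: idealMl. Qed.

Lemma ideal_colon K x : is_ideal K -> is_ideal (fun z => K (x * z)).
Proof.
move=> hK; split; first by rewrite mulr0; apply: ideal0.
- by move=> u v hu hv; rewrite mulrDr; apply: idealD.
- by move=> b u hu; rewrite mulrCA; apply: idealMl.
Qed.

Definition principal a : A -> Prop := fun x => exists r, x = r * a.

Lemma principal_ideal a : is_ideal (principal a).
Proof.
split; first by exists 0; rewrite mul0r.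
- by move=> x y [r ->] [s ->]; exists (r + s); rewrite mulrDl.
- by move=> b x [r ->]; exists (b * r); rewrite mulrA.
Qed.

Lemma principal_gen a : principal a a.
Proof. by exists 1; rewrite mul1r. Qed.

Definition adjoin I y : A -> Prop := fun w => exists i r, I i /\ w = i + r * y.

Lemma adjoin_ideal I y : is_ideal I -> is_ideal (adjoin I y).
Proof.
move=> hI; split; first by exists 0, 0; rewrite mul0r addr0; split=> //; apply: ideal0.
- move=> u v [i [r [hi ->]]] [i' [r' [hi' ->]]]; exists (i + i'), (r + r').
  by split; [apply: idealD | rewrite mulrDl addrACA].
- move=> b u [i [r [hi ->]]]; exists (b * i), (b * r).
  by split; [apply: idealMl | rewrite mulrDr mulrA].
Qed.

Lemma adjoin_sub I y x : I x -> adjoin I y x.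
Proof. by move=> hx; exists x, 0; rewrite mul0r addr0. Qed.

Lemma adjoin_gen I y : is_ideal I -> adjoin I y y.
Proof. by move=> hI; exists 0, 1; rewrite mul1r add0r; split=> //; apply: ideal0. Qed.

Lemma maximal_adjoin P y : maximal_ideal P -> ~ P y ->
  exists p s, P p /\ 1 = p + s * y.
Proof.
case=> hP _ hmax hy; case: (hmax _ (adjoin_ideal y hP) (@adjoin_sub P y)).
  by move=> h; case: hy; apply/h/adjoin_gen.
by move=> /(_ 1) [p [s [hp ->]]]; exists p, s.
Qed.

Lemma maximal_prime P : maximal_ideal P -> prime_ideal P.
Proof.
move=> hPm; have [hP hP1 _] := hPm; split=> // x y hxy.
have [hx | hx] := classic (P x); [by left | right].
have [p [s [hp e1]]] := maximal_adjoin hPm hx.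
have -> : y = p * y + s * (x * y) by rewrite mulrA -mulrDl -e1 mul1r.
exact: idealD hP (idealMr _ hP hp) (idealMl _ hP hxy).
Qed.

Definition ideal_mul I J (x : A) : Prop :=
  exists s : seq (A * A), foldr (fun p Q => I p.1 /\ J p.2 /\ Q) True s /\
    x = \sum_(p <- s) p.1 * p.2.

Lemma ideal_mul_ideal I J : is_ideal I -> is_ideal (ideal_mul I J).
Proof.
move=> hI; split.
- by exists [::]; rewrite big_nil.
- move=> x y [s [hs ->]] [t [ht ->]]; exists (s ++ t); rewrite big_cat; split=> //.
  by elim: s hs => //= p s IH [h1 [h2 h3]]; do 2!split=> //; apply: IH.
- move=> a x [s [hs ->]]; exists [seq (a * p.1, p.2) | p <- s]; split.
    elim: s hs => //= p s IH [h1 [h2 h3]].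
    by split; [apply: idealMl | split=> //; apply: IH].
  by rewrite big_map mulr_sumr; apply: eq_bigr => p _; rewrite mulrA.
Qed.

Lemma ideal_mul_mem I J x y : I x -> J y -> ideal_mul I J (x * y).
Proof. by move=> hx hy; exists [:: (x, y)]; rewrite big_cons big_nil addr0. Qed.

Lemma ideal_mul_ind I J K : is_ideal K ->
  (forall x y, I x -> J y -> K (x * y)) -> forall z, ideal_mul I J z -> K z.
Proof.
move=> hK h z [s [hs ->]]; elim: s hs => [|p s IH] /= hs.
  by rewrite big_nil; apply: ideal0.
by case: hs => [h1 [h2 h3]]; rewrite big_cons; apply: idealD => //; [apply: h | apply: IH].
Qed.

Lemma ideal_mulA I J K z y : is_ideal I ->
  ideal_mul I J z -> K y -> ideal_mul I (ideal_mul J K) (z * y).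
Proof.
move=> hI hz hy; rewrite mulrC.
apply: (ideal_mul_ind (K := fun z => ideal_mul I (ideal_mul J K) (y * z))) hz.
  exact/ideal_colon/ideal_mul_ideal.
by move=> u v hu hv; rewrite mulrCA (mulrC y); apply: ideal_mul_mem => //; apply: ideal_mul_mem.
Qed.

(* [I J = (c)] with [c != 0]. *)
Definition invertible_ideal I := exists J c, [/\ is_ideal J, c != 0,
  (forall x y, I x -> J y -> principal c (x * y)) & ideal_mul I J c].

Definition multiplication_ideal I := forall K, is_ideal K -> (forall x, K x -> I x) ->
  exists L, is_ideal L /\ forall x, K x <-> ideal_mul L I x.

Definition faithful_ideal I := forall d, (forall a, I a -> d * a = 0) -> d = 0.

Lemma multiplication_idealT : multiplication_ideal (fun _ => True).
Proof.
move=> K hK _; exists K; split=> // x; split.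
  by move=> hx; rewrite -[x]mulr1; apply: ideal_mul_mem.
by apply: ideal_mul_ind => // u v hu _; apply: idealMr.
Qed.

Lemma faithful_idealT : faithful_ideal (fun _ => True).
Proof. by move=> d hd; rewrite -[d]mulr1; apply: hd. Qed.

End Ideals.

Lemma ex_minn_prop (P : nat -> Prop) :
  (exists n, P n) -> exists n, P n /\ forall m, P m -> (n <= m)%N.
Proof.
move=> [n hn]; apply: NNPP => hno; move: n hn.
suff : forall n, ~ P n by move=> h n /h.
elim/ltn_ind => n IH hn; apply: hno; exists n; split=> // m hm.
by rewrite leqNgt; apply/negP => /IH.
Qed.

Section Noetherian.
Variables (A : comPzRingType) (hN : noetherian_ring A).
Implicit Types (I J P : A -> Prop).

(* Without a maximal element one could choose an ever-increasing chain. *)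
Lemma noetherian_maximal (Phi : (A -> Prop) -> Prop) :
  (exists I, is_ideal I /\ Phi I) ->
  exists I, [/\ is_ideal I, Phi I & forall J, is_ideal J -> Phi J ->
     (forall x, I x -> J x) -> forall x, J x -> I x].
Proof.
move=> [I0 [hI0 hP0]]; apply: NNPP => hno.
pose T := {I : A -> Prop | is_ideal I /\ Phi I}.
have step (I : T) : exists J : T, (forall x, sval I x -> sval J x) /\
    exists x, sval J x /\ ~ sval I x.
  case: I => I [hI hP]; apply: NNPP => hn; apply: hno; exists I; split=> // J hJ hPJ hIJ x hJx.
  apply: NNPP => hIx; apply: hn; exists (exist _ J (conj hJ hPJ)); split=> //; by exists x.
have [next hnext] := choice _ step.
pose chain k := sval (iter k next (exist _ I0 (conj hI0 hP0))).
have [N hNk] := @hN chain (fun k => proj1 (svalP (iter k next _)))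
  (fun k => proj1 (hnext (iter k next _))).
have [x [h1 h2]] := proj2 (hnext (iter N next (exist _ I0 (conj hI0 hP0)))).
by apply: h2; apply: (hNk N.+1).
Qed.

Lemma noetherian_exists_maximal_ideal I : is_ideal I -> ~ I 1 ->
  exists P, maximal_ideal P /\ forall x, I x -> P x.
Proof.
move=> hI h1.
have [P [hP [hIP hP1] hmax]] := @noetherian_maximal
  (fun J => (forall x, I x -> J x) /\ ~ J 1) (ex_intro _ I (conj hI (conj (fun x h => h) h1))).
exists P; split=> //; split=> // J hJ hPJ.
have [hJ1 | hJ1] := classic (J 1); first by right; apply: ideal1.
left=> x; split; last exact: hPJ.
by apply: hmax => //; split=> // y /hIP /hPJ.
Qed.

(* The product of the ideals in [Ps] is contained in [I]. *)
Definition prod_sub (Ps : seq (A -> Prop)) I :=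
  forall xs : seq A, List.Forall2 (fun P x => P x) Ps xs -> I (\prod_(x <- xs) x).

Definition nonzero_prime P := prime_ideal P /\ nonzero_ideal P.

Lemma noetherian_prime_product_sub I0 : is_ideal I0 -> nonzero_ideal I0 ->
  exists Ps, List.Forall nonzero_prime Ps /\ prod_sub Ps I0.
Proof.
move=> hI0 hnz0; apply: NNPP => hno.
have [I [hI [hnz hP] hmax]] := @noetherian_maximal
  (fun I => nonzero_ideal I /\ ~ exists Ps, List.Forall nonzero_prime Ps /\ prod_sub Ps I)
  (ex_intro _ I0 (conj hI0 (conj hnz0 hno))).
have h1 : ~ I 1.
  by move=> h1; apply: hP; exists [::]; split=> // xs hxs; inversion hxs; rewrite big_nil.
have [x [y [hxy [hx hy]]]] : exists x y, I (x * y) /\ ~ I x /\ ~ I y.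
  apply: NNPP => hc; apply: hP; exists [:: I]; split.
    constructor=> //; split=> //; split=> // a b hab.
    by apply: NNPP => hn; apply: hc; exists a, b; split=> //; split=> hh; apply: hn; tauto.
  move=> xs hxs; inversion hxs; subst; inversion H3; subst.
  by rewrite big_cons big_nil mulr1.
have adjoin_prod z : ~ I z -> exists Ps, List.Forall nonzero_prime Ps /\ prod_sub Ps (adjoin I z).
  move=> hz; apply: NNPP => hn; apply/hz/(hmax _ (adjoin_ideal z hI) _ (@adjoin_sub _ I z)).
    by split=> //; case: hnz => w [hw hw0]; exists w; split=> //; apply: adjoin_sub.
  exact: adjoin_gen.
have [Ps [hPs cPs]] := adjoin_prod x hx.
have [Qs [hQs cQs]] := adjoin_prod y hy.
apply: hP; exists (Ps ++ Qs); split; first exact/List.Forall_app.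
move=> xs hxs; have [xs1 [xs2 [h1' [h2' ->]]]] := List.Forall2_app_inv_l _ _ hxs.
rewrite big_cat /=.
have [i1 [r1 [hi1 ->]]] := cPs _ h1'.
have [i2 [r2 [hi2 ->]]] := cQs _ h2'.
have -> : (i1 + r1 * x) * (i2 + r2 * y) =
  i1 * (i2 + r2 * y) + (r1 * x * i2 + r1 * r2 * (x * y)) by ring.
exact: idealD hI (idealMr _ hI hi1) (idealD hI (idealMl _ hI hi2) (idealMl _ hI hxy)).
Qed.

End Noetherian.

Lemma prime_avoids_prod (A : comPzRingType) (P : A -> Prop) (Ps : seq (A -> Prop)) :
  prime_ideal P -> (forall Q, List.In Q Ps -> exists x, Q x /\ ~ P x) ->
  exists xs, List.Forall2 (fun (Q : A -> Prop) x => Q x) Ps xs /\ ~ P (\prod_(x <- xs) x).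
Proof.
move=> [hP hP1 hpr]; elim: Ps => [|Q Ps IH] h.
  by exists [::]; split; [constructor | rewrite big_nil].
have [x [hx hnx]] := h Q (or_introl erefl).
have [xs [h1 h2]] := IH (fun Q' hQ' => h Q' (or_intror hQ')).
by exists (x :: xs); split; [constructor | rewrite big_cons => /hpr []].
Qed.

Section Domain.
Variables (A : comPzRingType) (hd : integral_domain A).

Lemma domain_mulI (c x y : A) : c != 0 -> c * x = c * y -> x = y.
Proof.
move=> hc h; have : c * (x - y) = 0 by rewrite mulrBr h subrr.
by case/hd.2 => [/eqP|/eqP]; rewrite ?(negbTE hc) // subr_eq0 => /eqP.
Qed.

Lemma domain_mul_neq0 (x y : A) : x != 0 -> y != 0 -> x * y != 0.
Proof. by move=> hx hy; apply/eqP => /hd.2 [] /eqP; rewrite ?(negbTE hx) ?(negbTE hy). Qed.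

Lemma domain_faithful_ideal (I : A -> Prop) : nonzero_ideal I -> faithful_ideal I.
Proof.
move=> [a [ha an0]] d /(_ a ha) /hd.2 [] // ha0.
by move: an0; rewrite ha0 eqxx.
Qed.

Section DeterminantTrick.
Variables (p0 a j : A).

(* [frac_poly m] is [A] intersected with [p0] times the polynomials of degree
   at most [m] in [j / a]. *)
Definition frac_poly m (x : A) := exists d : nat -> A,
  x * a ^+ m = p0 * \sum_(i < m.+1) d i * j ^+ i * a ^+ (m - i).

Lemma frac_poly_ideal m : is_ideal (frac_poly m).
Proof.
split.
- by exists (fun _ => 0); rewrite mul0r big1 ?mulr0 // => i _; rewrite !mul0r.
- move=> x y [d hx] [d' hy]; exists (fun i => d i + d' i).
  rewrite mulrDl hx hy -mulrDr -big_split /=; congr (_ * _).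
  by apply: eq_bigr => i _; rewrite !mulrDl.
- move=> b x [d hx]; exists (fun i => b * d i).
  rewrite -mulrA hx mulrCA mulr_sumr; congr (_ * _).
  by apply: eq_bigr => i _; rewrite !mulrA.
Qed.

Lemma frac_polyS m x : frac_poly m x -> frac_poly m.+1 x.
Proof.
move=> [d hx]; exists (fun i => if (i <= m)%N then d i else 0).
rewrite big_ord_recr /= ltnn !mul0r addr0 exprS mulrCA hx mulrCA mulr_sumr.
congr (_ * _); apply: eq_bigr => i _ /=.
have him : (i <= m)%N by rewrite -ltnS.
by rewrite him subSn // exprS mulrCA.
Qed.

Lemma frac_poly_top m y : j ^+ m * p0 = a ^+ m * y -> frac_poly m y.
Proof.
move=> hy; exists (fun i => if i == m then 1 else 0).
rewrite big_ord_recr /= eqxx subnn expr0 mulr1 mul1r big1 ?add0r.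
  by rewrite mulrC -hy mulrC.
by move=> i _; rewrite eqn_leq (leqNgt m) ltn_ord andbF !mul0r.
Qed.

(* [p0 (j/a)^(N+1) = p0 (sum_(i <= N) d_i (j/a)^i)] with denominators cleared. *)
Lemma frac_poly_monic N y (d : nat -> A) : j ^+ N.+1 * p0 = a ^+ N.+1 * y ->
  y * a ^+ N = p0 * \sum_(i < N.+1) d i * j ^+ i * a ^+ (N - i) ->
  p0 * (j ^+ N.+1 + \sum_(i < N.+1) (- d i) * j ^+ i * a ^+ (N.+1 - i)) = p0 * 0.
Proof.
move=> hy hdN; rewrite mulr0 mulrDr -(mulrC (j ^+ N.+1)) hy.
have -> : a ^+ N.+1 * y = a * (y * a ^+ N) by rewrite exprS mulrCA mulrA mulrC mulrA.
rewrite hdN mulrCA mulr_sumr -mulrDr -big_split /= big1 ?mulr0 // => i _.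
have hi : (i <= N)%N by rewrite -ltnS.
by rewrite subSn // exprS; ring.
Qed.

(* The determinant trick: if [j S <= a S] for a set [S] containing [p0 != 0],
   then [j / a] is integral, hence [a] divides [j]. *)
Lemma dvd_of_mul_sub (hN : noetherian_ring A) (hic : integrally_closed A)
    (S : A -> Prop) : S p0 -> p0 != 0 -> a != 0 ->
  (forall x, S x -> exists y, S y /\ j * x = a * y) -> principal a j.
Proof.
move=> hp0 p0n0 an0 hj.
have pw k : exists y, S y /\ j ^+ k * p0 = a ^+ k * y.
  elim: k => [|k [y [hy hk]]]; first by exists p0; rewrite !expr0 !mul1r.
  have [z [hz hjz]] := hj y hy; exists z; split=> //.
  by rewrite exprS -mulrA hk mulrCA hjz exprS; ring.
have [N hNst] := hN frac_poly frac_poly_ideal frac_polyS.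
have [y [_ hyN]] := pw N.+1.
have [d hdN] := hNst N.+1 (leqnSn N) y (frac_poly_top hyN).
have [r hr] := hic j a N.+1 (fun i => - d i) an0 (domain_mulI p0n0 (frac_poly_monic hyN hdN)).
by exists r.
Qed.

End DeterminantTrick.

End Domain.

Section Dedekind.
Variables (A : comPzRingType) (hDed : dedekind_domain A).
Implicit Types (I J K L P Q : A -> Prop) (a b c x y : A).

(* The classical step towards invertibility of [P]: take a product of nonzero
   primes inside [(a)] with as few factors as possible; one factor is [P], and
   the product [b] of the others satisfies [b P <= (a)] but [b \notin (a)]. *)
Lemma dedekind_maximal_witness P a : maximal_ideal P -> P a -> a != 0 ->
  exists b, ~ principal a b /\ forall p, P p -> principal a (b * p).
Proof.
have [_ hN _ hpm] := hDed; move=> hPm hPa an0.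
have [hP hP1 _] := hPm.
have hex : exists k, exists Ps, [/\ size Ps = k, List.Forall (nonzero_prime (A:=A)) Ps
                                 & prod_sub Ps (principal a)].
  have [Ps [h1 h2]] := noetherian_prime_product_sub hN (principal_ideal a)
    (ex_intro _ a (conj (principal_gen a) an0)).
  by exists (size Ps), Ps.
have [k [[Ps [hsz hPs hcPs]] hmin]] := ex_minn_prop hex.
have [Q [hQin hQP]] : exists Q, List.In Q Ps /\ forall x, Q x -> P x.
  apply: NNPP => hn.
  have hav Q : List.In Q Ps -> exists x, Q x /\ ~ P x.
    move=> hQ; apply: NNPP => hn'; apply: hn; exists Q; split=> // x hx.
    by apply: NNPP => hnx; apply: hn'; exists x.
  have [xs [hxs hnP]] := prime_avoids_prod (maximal_prime hPm) hav.
  by apply: hnP; have [r ->] := hcPs xs hxs; apply: idealMl.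
have [hQpr hQnz] : nonzero_prime Q by move/List.Forall_forall: hPs; apply.
have [hQ _ hQmax] := hpm Q hQpr hQnz.
have hPQ x : P x -> Q x.
  by case: (hQmax P hP hQP) => [h /h // | /(_ 1) /hP1].
have [l1 [l2 hPsE]] := List.in_split _ _ hQin.
have [xs [hxs hnb]] : exists xs, List.Forall2 (fun (Q : A -> Prop) x => Q x) (l1 ++ l2) xs /\
    ~ principal a (\prod_(x <- xs) x).
  apply: NNPP => hn.
  have : (k <= size (l1 ++ l2))%N.
    apply: hmin; exists (l1 ++ l2); split=> //.
      move: hPs; rewrite hPsE => /List.Forall_app [h1 h2].
      by apply/List.Forall_app; split=> //; inversion h2.
    by move=> ys hys; apply: NNPP => hy; apply: hn; exists ys.
  by rewrite -hsz hPsE !size_cat /= addnS ltnn.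
exists (\prod_(x <- xs) x); split=> // p hp.
have [xs1 [xs2 [h1 [h2 hE]]]] := List.Forall2_app_inv_l _ _ hxs.
have hF : List.Forall2 (fun (Q : A -> Prop) x => Q x) Ps (xs1 ++ p :: xs2).
  by rewrite hPsE; apply: List.Forall2_app => //; constructor=> //; apply: hPQ.
have [r hr] := hcPs _ hF; exists r.
by rewrite -hr hE !big_cat big_cons /=; ring.
Qed.

(* [J = {x | x P <= (a)}] contains [a] and [b]; the determinant trick gives
   [y \notin P] with [a y \in b P], and [1 = p + s y] puts [a] in [P J]. *)
Lemma dedekind_maximal_invertible P : maximal_ideal P -> nonzero_ideal P -> invertible_ideal P.
Proof.
have [hd hN hic _] := hDed; move=> hPm [a [hPa an0]].
have [hP _ _] := hPm.
have [b [hnb hbP]] := dedekind_maximal_witness hPm hPa an0.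
have [y [[q [hq hyq]] hny]] : exists y, (exists q, P q /\ a * y = b * q) /\ ~ P y.
  apply: NNPP => hn; apply: hnb.
  apply: (dvd_of_mul_sub hd hN hic hPa an0 an0) => x hx.
  have [r hr] := hbP x hx; exists r; split; last by rewrite hr mulrC.
  by apply: NNPP => hr'; apply: hn; exists r; split=> //; exists x; rewrite hr mulrC.
have [p [s [hp e1]]] := maximal_adjoin hPm hny.
pose J x := forall p, P p -> principal a (x * p).
have hJ : is_ideal J.
  split.
  - by move=> u _; exists 0; rewrite !mul0r.
  - move=> u v hu hv w hw; rewrite mulrDl.
    exact: idealD (principal_ideal a) (hu w hw) (hv w hw).
  - by move=> c u hu w hw; rewrite -mulrA; apply: idealMl (principal_ideal a) (hu w hw).
exists J, a; split=> //; first by move=> x z hx hz; rewrite mulrC; apply: hz.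
have -> : a = p * a + q * (s * b) by rewrite -{1}[a]mulr1 e1 mulrDr mulrCA hyq; ring.
apply: idealD (ideal_mul_ideal J hP) _ _.
  by apply: ideal_mul_mem => // z hz; rewrite mulrC; exists z.
apply: ideal_mul_mem => // z hz; rewrite -mulrA.
exact: idealMl (principal_ideal a) (hbP z hz).
Qed.

(* If [P J = (a)] and [I <= P] then [a^-1 I J] strictly contains [I]: otherwise
   [J <= (a)] by the determinant trick, and then [(a) = P J <= a P] forces [1 \in P]. *)
Lemma dedekind_mul_inverse_grows I P J a :
  is_ideal I -> nonzero_ideal I -> maximal_ideal P -> (forall x, I x -> P x) ->
  a != 0 -> (forall x y, P x -> J y -> principal a (x * y)) -> ideal_mul P J a ->
  ~ (forall x, ideal_mul I J (a * x) -> I x).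
Proof.
have [hd hN hic _] := hDed; move=> hI [p0 [hp0 p0n0]] [hP hP1 _] hIP an0 hPJ hPJa hsub.
have hIJa z : ideal_mul I J z -> principal a z.
  by apply: ideal_mul_ind (principal_ideal a) _ z => x y /hIP; apply: hPJ.
have hJa j : J j -> principal a j.
  move=> hj; apply: (dvd_of_mul_sub hd hN hic hp0 p0n0 an0) => x hx.
  have [u hu] := hIJa _ (ideal_mul_mem hx hj).
  exists u; split; last by rewrite mulrC hu mulrC.
  by apply: hsub; rewrite mulrC -hu; apply: ideal_mul_mem.
have [p [hp hpa]] : exists p, P p /\ a = p * a.
  apply: (ideal_mul_ind (K := fun z => exists p, P p /\ z = p * a)) hPJa.
    split; first by exists 0; rewrite mul0r; split=> //; apply: ideal0.
    - move=> u v [w [hw ->]] [w' [hw' ->]]; exists (w + w').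
      by rewrite mulrDl; split=> //; apply: idealD.
    - by move=> b u [w [hw ->]]; exists (b * w); rewrite mulrA; split=> //; apply: idealMl.
  move=> x y hx /hJa [r ->]; exists (x * r).
  by rewrite mulrA; split=> //; apply: idealMr.
apply: hP1; suff -> : (1 : A) = p by [].
by apply: (domain_mulI hd an0); rewrite mulr1 mulrC -hpa.
Qed.

(* From [I' J' = (c')] with [I' = a^-1 I J] follows [I (J J') = (a c')]. *)
Lemma invertible_of_mul_colon I J a : is_ideal I -> is_ideal J -> a != 0 ->
  (forall z, ideal_mul I J z -> principal a z) ->
  invertible_ideal (fun x => ideal_mul I J (a * x)) -> invertible_ideal I.
Proof.
have [hd _ _ _] := hDed.
move=> hI hJ an0 hIJa [J' [c' [hJ' c'n0 hIJ' hIJc']]].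
exists (ideal_mul J J'), (a * c'); split.
- exact: ideal_mul_ideal.
- exact: domain_mul_neq0.
- move=> x0 y hx0; apply: (ideal_mul_ind (K := fun y => principal (a * c') (x0 * y))).
    exact: ideal_colon x0 (principal_ideal _).
  move=> u v hu hv; have [w hw] := hIJa _ (ideal_mul_mem hx0 hu).
  have hw' : ideal_mul I J (a * w) by rewrite mulrC -hw; apply: ideal_mul_mem.
  have [t ht] := hIJ' w v hw' hv.
  by exists t; rewrite mulrA hw mulrAC ht; ring.
- apply: (ideal_mul_ind (K := fun z => ideal_mul I (ideal_mul J J') (a * z))) hIJc'.
    exact: ideal_colon a (ideal_mul_ideal _ hI).
  by move=> u v hu hv; rewrite mulrA; apply: ideal_mulA.
Qed.

Lemma dedekind_ideal_invertible I0 : is_ideal I0 -> nonzero_ideal I0 -> invertible_ideal I0.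
Proof.
have [hd hN _ _] := hDed; move=> hI0 hnz0; apply: NNPP => hno.
have [I [hI [hnz hP] hmax]] := noetherian_maximal hN
  (ex_intro (fun I => is_ideal I /\ nonzero_ideal I /\ ~ invertible_ideal I) I0
    (conj hI0 (conj hnz0 hno))).
have h1 : ~ I 1.
  move=> h1; apply: hP; exists (fun _ => True), 1; split=> //; first exact: hd.1.
    by move=> x y _ _; exists (x * y); rewrite mulr1.
  by rewrite -[1]mulr1; apply: ideal_mul_mem.
have [P [hPm hIP]] := noetherian_exists_maximal_ideal hN hI h1.
have hPnz : nonzero_ideal P by case: hnz => x [hx hx0]; exists x; split=> //; apply: hIP.
have [J [a [hJ an0 hPJ hPJa]]] := dedekind_maximal_invertible hPm hPnz.
pose I' x := ideal_mul I J (a * x).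
have hI' : is_ideal I' := ideal_colon a (ideal_mul_ideal J hI).
have hII' x : I x -> I' x.
  move=> hx; rewrite /I' mulrC.
  apply: (ideal_mul_ind (K := fun z => ideal_mul I J (x * z))) hPJa.
    exact: ideal_colon x (ideal_mul_ideal J hI).
  by move=> u v hu hv; rewrite mulrA; apply: ideal_mul_mem => //; apply: idealMr.
have [x [hx hnx]] : exists x, I' x /\ ~ I x.
  apply: NNPP => hn; apply: (dedekind_mul_inverse_grows hI hnz hPm hIP an0 hPJ hPJa).
  by move=> x hx; apply: NNPP => hnx; apply: hn; exists x.
have hinv' : invertible_ideal I'.
  apply: NNPP => hn'; apply/hnx/(hmax I' hI') => //; split=> //.
  by case: hnz => w [hw hw0]; exists w; split=> //; apply: hII'.
apply/hP/(invertible_of_mul_colon hI hJ an0) => // z.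
by apply: ideal_mul_ind (principal_ideal a) _ z => u v /hIP; apply: hPJ.
Qed.

(* [K = (c^-1 K J) I] where [I J = (c)]. *)
Lemma dedekind_multiplication_ideal I : is_ideal I -> nonzero_ideal I -> multiplication_ideal I.
Proof.
have [hd _ _ _] := hDed; move=> hI hnz K hK hKI.
have [J [c [_ cn0 hIJ hc]]] := dedekind_ideal_invertible hI hnz.
pose L x := ideal_mul K J (c * x).
have hL : is_ideal L := ideal_colon c (ideal_mul_ideal J hK).
have scaled_ideal K' y : is_ideal K' -> is_ideal (fun z => exists w, K' w /\ z * y = c * w).
  move=> hK'; split; first by exists 0; rewrite mul0r mulr0; split=> //; apply: ideal0.
  - move=> u v [w [hw hu]] [w' [hw' hv]]; exists (w + w').
    by split; [apply: idealD | rewrite mulrDl hu hv mulrDr].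
  - move=> b u [w [hw hu]]; exists (b * w).
    by split; [apply: idealMl | rewrite -mulrA hu mulrCA].
exists L; split=> // k; split.
- move=> hk.
  have [w [hw hcw]] : exists w, ideal_mul L I w /\ c * k = c * w.
    apply: (ideal_mul_ind (K := fun z => exists w, ideal_mul L I w /\ z * k = c * w)) hc.
      exact: scaled_ideal (ideal_mul_ideal I hL).
    move=> u v hu hv; have [t ht] := hIJ _ _ (hKI k hk) hv.
    have hLt : L t by rewrite /L mulrC -ht; apply: ideal_mul_mem.
    exists (t * u); split; first exact: ideal_mul_mem.
    by rewrite -mulrA (mulrC v) ht; ring.
  by rewrite (domain_mulI hd cn0 hcw).
- apply: (ideal_mul_ind hK) => l i hl hi.
  have [w [hw hcw]] : exists w, K w /\ (c * l) * i = c * w.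
    apply: (ideal_mul_ind (K := fun z => exists w, K w /\ z * i = c * w)) hl.
      exact: scaled_ideal _ _ hK.
    move=> k0 j hk0 hj; have [t ht] := hIJ _ _ hi hj.
    exists (t * k0); split; first exact: idealMl.
    by rewrite -mulrA (mulrC j) ht; ring.
  by rewrite -mulrA in hcw; rewrite (domain_mulI hd cn0 hcw).
Qed.

End Dedekind.

Lemma pir_noetherian (A : comPzRingType) : principal_ideal_ring A -> noetherian_ring A.
Proof.
move=> hP I hI hinc.
have hmono k l : (k <= l)%N -> forall x, I k x -> I l x.
  move=> /subnK <-; elim: (l - k)%N => [|d IH] x hx //=.
  by rewrite addSn; apply/hinc/IH.
pose U x := exists k, I k x.
have hU : is_ideal U.
  split; first by exists 0%N; apply: ideal0 (hI 0%N).
  - move=> x y [k hx] [l hy]; exists (maxn k l); apply: idealD (hI _) _ _.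
      by apply: hmono hx; rewrite leq_maxl.
    by apply: hmono hy; rewrite leq_maxr.
  - by move=> a x [k hx]; exists k; apply: idealMl (hI k) hx.
have [a ha] := hP U hU.
have [N hN] : U a by apply/ha; exists 1; rewrite mul1r.
exists N => k _ x hx.
have [r ->] : exists r, x = r * a by apply/ha; exists k.
exact: idealMl (hI N) hN.
Qed.

Section LocalRing.
Variables (A : comPzRingType) (m : A -> Prop).
Hypotheses (hN : noetherian_ring A) (hm : maximal_ideal m)
  (hm_unique : forall m' : A -> Prop, maximal_ideal m' -> forall x, m' x <-> m x).

Lemma local_ideal_not_sub_max J : is_ideal J -> ~ (forall x, J x -> m x) -> J 1.
Proof.
move=> hJ hnJ; apply: NNPP => hJ1.
have [P [hP hJP]] := noetherian_exists_maximal_ideal hN hJ hJ1.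
by apply: hnJ => x /hJP /(hm_unique hP x).
Qed.

(* [(t^N) = (t^(N+1))] gives [t^N = r t^N t] with [1 - r t] a unit. *)
Lemma artinian_local_gen_nilpotent (t : A) : artinian_ring A ->
  (forall x, m x <-> principal t x) -> exists N, t ^+ N = 0.
Proof.
move=> hA ht.
have hdec k x : principal (t ^+ k.+1) x -> principal (t ^+ k) x.
  by move=> [r ->]; exists (r * t); rewrite exprS mulrCA mulrA (mulrC t).
have [N hNk] := hA _ (fun k => principal_ideal (t ^+ k)) hdec.
have [r hr] := hNk N.+1 (leqnSn N) _ (principal_gen (t ^+ N)).
have [hmI hm1 _] := hm.
have [u hu1] : principal (1 - r * t) 1.
  apply: (local_ideal_not_sub_max (principal_ideal _)) => hsub; apply: hm1.
  rewrite -(subrK (r * t) 1).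
  exact: idealD hmI (hsub _ (principal_gen _)) (idealMl _ hmI (proj2 (ht t) (principal_gen t))).
exists N; rewrite -[t ^+ N]mulr1 hu1.
have -> : t ^+ N * (u * (1 - r * t)) = u * (t ^+ N - r * t ^+ N.+1) by rewrite exprS; ring.
by rewrite -hr subrr mulr0.
Qed.

End LocalRing.

Lemma dependent_choice (I : Type) (T : I -> Type) (P : forall i, T i -> Prop) :
  (forall i, exists x, P i x) -> exists f : forall i, T i, forall i, P i (f i).
Proof.
move=> h; exists (fun i => sval (constructive_indefinite_description _ (h i))) => i.
exact: svalP.
Qed.

Section Modules.
Variables (R : comPzRingType) (M : lmodType R).
Implicit Types (N : M -> Prop) (I : R -> Prop) (x y : M).

Lemma submodule0 N : is_submodule N -> N 0.
Proof. by case. Qed.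

Lemma submoduleD N x y : is_submodule N -> N x -> N y -> N (x + y).
Proof. by case=> _ h _; apply: h. Qed.

Lemma submoduleZ N r x : is_submodule N -> N x -> N (r *: x).
Proof. by case=> _ _ h; apply: h. Qed.

Lemma submoduleB N x y : is_submodule N -> N x -> N y -> N (x - y).
Proof. by move=> hN hx hy; rewrite -scaleN1r; apply: submoduleD (submoduleZ _ hN hy). Qed.

Lemma submodule_sum N n (F : 'I_n -> M) :
  is_submodule N -> (forall i, N (F i)) -> N (\sum_i F i).
Proof.
by move=> hN hF; apply: big_ind => //; [apply: submodule0 | move=> x y; apply: submoduleD].
Qed.

Lemma cyclic_submodule x : is_submodule (fun z => exists s, z = s *: x).
Proof.
split; first by exists 0; rewrite scale0r.
- by move=> u v [s ->] [s' ->]; exists (s + s'); rewrite scalerDl.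
- by move=> r u [s ->]; exists (r * s); rewrite scalerA.
Qed.

Lemma ideal_times_module_mem I r x : I r -> ideal_times_module I (r *: x).
Proof. by move=> hr; exists [:: (r, x)]; rewrite big_cons big_nil addr0. Qed.

Lemma ideal_times_module_ind I N : is_submodule N ->
  (forall r x, I r -> N (r *: x)) -> forall x, ideal_times_module I x -> N x.
Proof.
move=> hN h x [s [hs ->]]; elim: s hs => [|p s IH] /= hs.
  by rewrite big_nil; apply: submodule0.
by case: hs => h1 h2; rewrite big_cons; apply: submoduleD hN (h _ _ h1) (IH h2).
Qed.

Lemma ideal_times_module_submodule I : is_ideal I -> is_submodule (ideal_times_module (M:=M) I).
Proof.
move=> hI; split; first by exists [::]; rewrite big_nil.
- move=> x y [s [hs ->]] [t [ht ->]]; exists (s ++ t); rewrite big_cat; split=> //.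
  by elim: s hs => //= p s IH [h1 h2]; split=> //; apply: IH.
- move=> r x [s [hs ->]]; exists [seq (r * p.1, p.2) | p <- s]; split.
    by elim: s hs => //= p s IH [h1 h2]; split; [apply: idealMl | apply: IH].
  by rewrite big_map scaler_sumr; apply: eq_bigr => p _; rewrite scalerA.
Qed.

End Modules.

Section Decomposition.
Variables (R : comPzRingType) (n : nat) (D : 'I_n -> comNzRingType)
  (pi : forall i : 'I_n, {rmorphism R -> D i}).
Hypothesis pi_inj : forall x : R, (forall i, pi i x = 0) -> x = 0.
Hypothesis pi_surj : forall d : (forall i : 'I_n, D i), exists x : R, forall i, pi i x = d i.
Variable e : 'I_n -> R.
Hypothesis he : forall i j : 'I_n, pi j (e i) = (if i == j then 1 else 0).
Variable M : lmodType R.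

Local Notation part i := (@scaled_part R M (e i)).

Lemma pi_inj_eq x y : (forall j, pi j x = pi j y) -> x = y.
Proof.
move=> h; apply/eqP; rewrite -subr_eq0; apply/eqP; apply: pi_inj => j.
by rewrite rmorphB h subrr.
Qed.

Lemma pi_mul_idem i j r : pi j (r * e i) = if i == j then pi j r else 0.
Proof. by rewrite rmorphM he; case: (i == j); rewrite ?mulr1 ?mulr0. Qed.

Lemma sum_idem : \sum_i e i = 1.
Proof.
apply: pi_inj_eq => j; rewrite rmorph_sum rmorph1 (bigD1 j) //= he eqxx big1 ?addr0 //.
by move=> i /negbTE hij; rewrite he hij.
Qed.

Lemma idem_mul_idem i : e i * e i = e i.
Proof. by apply: pi_inj_eq => j; rewrite pi_mul_idem he; case: (i == j). Qed.

Lemma pi_surj1 i (d : D i) : exists r, pi i r = d.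
Proof.
pose f j := if i =P j is ReflectT h then ecast k (D k) h d else 0.
have [x hx] := pi_surj f; exists x; rewrite hx /f.
by case: (i =P i) => // h; rewrite (eq_irrelevance h erefl).
Qed.

Lemma pi_surj1_idem i (d : D i) : exists r, pi i r = d /\ r * e i = r.
Proof.
have [r hr] := pi_surj1 d; exists (r * e i).
by rewrite pi_mul_idem eqxx -mulrA idem_mul_idem.
Qed.

Lemma partP i x : part i x <-> e i *: x = x.
Proof. by split=> [[m ->] | h]; [rewrite scalerA idem_mul_idem | exists x]. Qed.

Lemma part_scaled i (m : M) : part i (e i *: m).
Proof. by exists m. Qed.

Lemma part_submodule i : is_submodule (part i).
Proof.
split; first by exists 0; rewrite scaler0.
- by move=> x y [m ->] [m' ->]; exists (m + m'); rewrite scalerDr.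
- by move=> r x [m ->]; exists (r *: m); rewrite !scalerA mulrC.
Qed.

Lemma sum_parts (x : M) : x = \sum_i e i *: x.
Proof. by rewrite -scaler_suml sum_idem scale1r. Qed.

Lemma part_scale_pi0 i r x : pi i r = 0 -> part i x -> r *: x = 0.
Proof.
move=> hr /partP <-; rewrite scalerA.
suff -> : r * e i = 0 by rewrite scale0r.
by apply: pi_inj => j; rewrite pi_mul_idem; case: eqP => // <-.
Qed.

Lemma part_scale_pi i r s x : pi i r = pi i s -> part i x -> r *: x = s *: x.
Proof.
move=> h hx; apply/eqP; rewrite -subr_eq0 -scalerBl; apply/eqP.
by apply: (part_scale_pi0 (i := i)); rewrite // rmorphB h subrr.
Qed.

(* [D i]-linear maps on [e i M], which is a [D i]-module through [pi i]. *)
Definition part_additive i (f : M -> D i) :=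
  (forall x y, part i x -> part i y -> f (x + y) = f x + f y) /\
  (forall r x, part i x -> f (r *: x) = pi i r * f x).

Definition part_iso i (I : D i -> Prop) (f : M -> D i) :=
  [/\ (forall x y, part i x -> part i y -> f (x + y) = f x + f y),
      (forall r x, part i x -> f (r *: x) = pi i r * f x),
      (forall x y, part i x -> part i y -> f x = f y -> x = y),
      (forall x, part i x -> I (f x)) &
      (forall a, I a -> exists x, part i x /\ f x = a)].

Lemma part_additive0 i (f : M -> D i) : part_additive f -> f 0 = 0.
Proof.
case=> fD _; have h0 := submodule0 (part_submodule i).
by apply: (@addrI _ (f 0)); rewrite addr0 -fD // addr0.
Qed.

Lemma part_iso_additive i I (f : M -> D i) : part_iso I f -> part_additive f.
Proof. by case. Qed.

Definition part_image i (f : M -> D i) (N : M -> Prop) (d : D i) :=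
  exists x, [/\ N x, part i x & f x = d].

Lemma part_image_ideal i (f : M -> D i) (N : M -> Prop) : part_additive f ->
  is_submodule N -> is_ideal (part_image f N).
Proof.
move=> hf hN; have [fD fZ] := hf; have hPi := part_submodule i.
split; first by exists 0; rewrite (part_additive0 hf); split=> //; apply: submodule0.
- move=> a b [x [hx hx' <-]] [y [hy hy' <-]]; exists (x + y).
  by split; [apply: submoduleD | apply: submoduleD | apply: fD].
- move=> d a [x [hx hx' <-]]; have [r <-] := pi_surj1 d; exists (r *: x).
  by split; [apply: submoduleZ | apply: submoduleZ | apply: fZ].
Qed.

Lemma faithful_of_part_isos (I : forall i, D i -> Prop) (f : forall i, M -> D i) :
  (forall i, part_iso (I i) (f i)) -> (forall i, faithful_ideal (I i)) -> faithful_module M.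
Proof.
move=> hf hfaith r hr; apply: pi_inj => i; apply: hfaith => a ha.
have [fD fZ _ _ fsurj] := hf i; have [y [hy <-]] := fsurj a ha.
by rewrite -fZ // hr (part_additive0 (part_iso_additive (hf i))).
Qed.

Definition pi_preimage (L : forall i, D i -> Prop) (r : R) := forall i, L i (pi i r).

Lemma pi_preimage_ideal L : (forall i, is_ideal (L i)) -> is_ideal (pi_preimage L).
Proof.
move=> hL; split.
- by move=> i; rewrite rmorph0; apply: ideal0 (hL i).
- by move=> x y hx hy i; rewrite rmorphD; apply: idealD (hL i) (hx i) (hy i).
- by move=> a x hx i; rewrite rmorphM; apply: idealMl (hL i) (hx i).
Qed.

Lemma pi_image_ideal i (I : R -> Prop) : is_ideal I ->
  is_ideal (fun d => exists r, I r /\ pi i r = d).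
Proof.
move=> hI; split; first by exists 0; rewrite rmorph0; split=> //; apply: ideal0.
- move=> a b [r [hr <-]] [s [hs <-]]; exists (r + s).
  by rewrite rmorphD; split=> //; apply: idealD.
- move=> d a [r [hr <-]]; have [s <-] := pi_surj1 d; exists (s * r).
  by rewrite rmorphM; split=> //; apply: idealMl.
Qed.

Lemma sub_ideal_times_of_part_isos (I L : forall i, D i -> Prop) (f : forall i, M -> D i)
    (N : M -> Prop) : (forall i, part_iso (I i) (f i)) -> is_submodule N ->
  (forall i, is_ideal (L i)) ->
  (forall i d, part_image (f i) N d -> ideal_mul (L i) (I i) d) ->
  forall x, N x -> ideal_times_module (pi_preimage L) x.
Proof.
move=> hf hN hL hNL x hx.
have hJM := ideal_times_module_submodule M (pi_preimage_ideal hL).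
rewrite (sum_parts x); apply: (submodule_sum hJM) => i.
have [fD fZ finj fin fsurj] := hf i.
have : part_image (f i) (ideal_times_module (pi_preimage L)) (f i (e i *: x)).
  apply: (ideal_mul_ind (part_image_ideal (part_iso_additive (hf i)) hJM)); last first.
    by apply: hNL; exists (e i *: x); split=> //; [apply: submoduleZ hN hx | apply: part_scaled].
  move=> l a hl /fsurj [m [hm <-]]; have [s [hs hse]] := pi_surj1_idem l.
  exists (s *: m); split.
  + apply: ideal_times_module_mem => j; case: (eqVneq i j) => [<-|hij]; first by rewrite hs.
    by rewrite -hse pi_mul_idem (negbTE hij); apply: ideal0 (hL j).
  + by apply/partP; rewrite scalerA mulrC hse.
  + by rewrite fZ // hs.
by case=> y [hy1 hy2 hy3]; rewrite -(finj _ _ hy2 (part_scaled _ _) hy3).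
Qed.

Lemma ideal_times_sub_of_part_isos (I L : forall i, D i -> Prop) (f : forall i, M -> D i)
    (N : M -> Prop) : (forall i, part_iso (I i) (f i)) -> is_submodule N ->
  (forall i d, ideal_mul (L i) (I i) d -> part_image (f i) N d) ->
  forall x, ideal_times_module (pi_preimage L) x -> N x.
Proof.
move=> hf hN hLN; apply: ideal_times_module_ind => // r m hr.
rewrite (sum_parts (r *: m)); apply: (submodule_sum hN) => i.
have [fD fZ finj fin fsurj] := hf i.
have hrm : part i (r *: (e i *: m)) := submoduleZ _ (part_submodule i) (part_scaled i m).
have : part_image (f i) N (pi i r * f i (e i *: m)).
  by apply: hLN; apply: ideal_mul_mem; [apply: hr | apply/fin/part_scaled].
case=> y [hy1 hy2]; rewrite -fZ; last exact: part_scaled.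
by move=> hy3; rewrite scalerA mulrC -scalerA -(finj _ _ hy2 hrm hy3).
Qed.

(* Write the image of [N /\ e i M] in [I i] as [L i * I i]; then [N = J M]
   for the ideal [J] of [R] with components [L i]. *)
Lemma multiplication_of_part_isos (I : forall i, D i -> Prop) (f : forall i, M -> D i) :
  (forall i, part_iso (I i) (f i)) -> (forall i, multiplication_ideal (I i)) ->
  multiplication_module M.
Proof.
move=> hf hmult N hN.
have hKL i : exists L, is_ideal L /\ forall d, part_image (f i) N d <-> ideal_mul L (I i) d.
  apply: hmult; first exact: part_image_ideal (part_iso_additive (hf i)) hN.
  by move=> d [x [_ hx <-]]; have [_ _ _ fin _] := hf i; apply: fin.
have [L hL] := dependent_choice hKL.
exists (pi_preimage L); split; first by apply: pi_preimage_ideal => i; case: (hL i).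
move=> x; split.
  by apply: (sub_ideal_times_of_part_isos hf hN) => [i | i d /(hL i).2]; first case: (hL i).
by apply: (ideal_times_sub_of_part_isos hf hN) => i d /(hL i).2.
Qed.

Lemma faithful_multiplication_of_part_isos :
  (forall i, exists I : D i -> Prop,
     [/\ multiplication_ideal I, faithful_ideal I & iso_to_ideal (pi i) (part i) I]) ->
  faithful_module M /\ multiplication_module M.
Proof.
move=> /dependent_choice [I hI].
have [f hf] := dependent_choice (fun i => let: And3 _ _ hiso := hI i in hiso).
split; first by apply: faithful_of_part_isos hf _ => i; have [] := hI i.
by apply: multiplication_of_part_isos hf _ => i; have [] := hI i.
Qed.

Lemma ideal_times_part_eq0 i (I : R -> Prop) w : (forall r, I r -> pi i r = 0) ->
  part i w -> ideal_times_module I w -> w = 0.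
Proof.
move=> hI /partP hwi hw; rewrite -hwi.
have hN : is_submodule (fun z : M => e i *: z = 0).
  split; first by rewrite scaler0.
  - by move=> x y hx hy; rewrite scalerDr hx hy addr0.
  - by move=> r x hx; rewrite scalerA mulrC -scalerA hx scaler0.
apply: (ideal_times_module_ind hN) hw => r m hr.
by rewrite scalerA mulrC -scalerA (part_scale_pi0 (hI r hr)) ?scaler0 //; apply: part_scaled.
Qed.

(* If [g] maps [e i M] into the cyclic module [R x0], faithfully on [e i M]
   and with [Ann (x0)] killed by [pi i], then [y |-> s] with [g y = s x0]
   induces a [D i]-linear embedding of [e i M] into [D i]. *)
Lemma part_embedding i (x0 : M) g : part i x0 ->
  (forall y, part i y -> exists s, g *: y = s *: x0) ->
  (forall s, s *: x0 = 0 -> pi i s = 0) ->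
  (forall y, part i y -> g *: y = 0 -> y = 0) ->
  exists f : M -> D i, [/\ part_additive f,
    (forall x y, part i x -> part i y -> f x = f y -> x = y) &
    (forall y s, part i y -> g *: y = s *: x0 -> f y = pi i s)].
Proof.
move=> hx0 hg hann hinj; have hPi := part_submodule i.
have [sel hsel] : exists sel : M -> R, forall y, part i y -> g *: y = sel y *: x0.
  apply: (choice (fun y s => part i y -> g *: y = s *: x0)) => y.
  by have [/hg [s hs] | hy] := classic (part i y); [exists s | exists 0].
have hf y s : part i y -> g *: y = s *: x0 -> pi i (sel y) = pi i s.
  move=> hy hs; apply/eqP; rewrite -subr_eq0 -rmorphB; apply/eqP; apply: hann.
  by rewrite scalerBl -hsel // hs subrr.
exists (fun y => pi i (sel y)); split.
- split.
    move=> x y hx hy; rewrite -rmorphD; apply: hf; first exact: submoduleD.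
    by rewrite scalerDr scalerDl -!hsel.
  move=> r x hx; rewrite -rmorphM; apply: hf; first exact: submoduleZ.
  by rewrite scalerA mulrC -scalerA hsel // scalerA.
- move=> x y hx hy hxy; apply/eqP; rewrite -subr_eq0; apply/eqP.
  apply: hinj; first exact: submoduleB.
  by rewrite scalerBr hsel // hsel // (part_scale_pi hxy hx0) subrr.
- by move=> y s hy hs; apply: hf.
Qed.

Lemma part_ideal_times_sub i (I : R -> Prop) (tau : R) x :
  (forall d, (exists r, I r /\ pi i r = d) -> principal (pi i tau) d) ->
  ideal_times_module I x -> exists y, part i y /\ e i *: x = tau *: y.
Proof.
move=> hIt; have hPi := part_submodule i.
have hTM : is_submodule (fun z => exists y, part i y /\ e i *: z = tau *: y).
  split; first by exists 0; rewrite !scaler0; split=> //; apply: submodule0.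
  - move=> u v [y1 [hy1 hu]] [y2 [hy2 hv]]; exists (y1 + y2).
    by split; [apply: submoduleD | rewrite !scalerDr hu hv].
  - move=> c u [y1 [hy1 hu]]; exists (c *: y1); split; first exact: submoduleZ.
    by rewrite scalerA mulrC -scalerA hu !scalerA mulrC.
apply: (ideal_times_module_ind hTM) => c m0 hc.
have [s0 hs0] := hIt _ (ex_intro _ c (conj hc erefl)); have [sg hsg] := pi_surj1 s0.
exists ((sg * e i) *: m0); split; first by rewrite -scalerA; apply: submoduleZ (part_scaled _ _).
rewrite !scalerA; congr (_ *: _); apply: pi_inj_eq => j.
rewrite mulrA pi_mul_idem mulrC pi_mul_idem; case: eqVneq => [<-|] //.
by rewrite rmorphM hs0 hsg mulrC.
Qed.

Section FaithfulMultiplication.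
Hypotheses (hF : faithful_module M) (hM : multiplication_module M).

Lemma part_neq0 i : exists2 x, part i x & x != 0.
Proof.
apply: NNPP => hn.
have he0 : e i = 0.
  apply: hF => m; apply: NNPP => hm; apply: hn; exists (e i *: m); first exact: part_scaled.
  exact/eqP.
by have := he i i; rewrite eqxx he0 rmorph0 => /eqP; rewrite eq_sym oner_eq0.
Qed.

Lemma part_torsionfree i g w : integral_domain (D i) -> pi i g != 0 ->
  part i w -> g *: w = 0 -> w = 0.
Proof.
move=> [_ hdom] hg hw hgw.
have [I [_ hIw]] := hM (cyclic_submodule w).
apply: (ideal_times_part_eq0 (I := I)) hw _; last by apply/hIw; exists 1; rewrite scale1r.
move=> r hr; have hgr : g * r = 0.
  apply: hF => m; have [s hs] : exists s, r *: m = s *: w.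
    by apply/hIw; apply: ideal_times_module_mem.
  by rewrite -scalerA hs scalerA mulrC -scalerA hgw scaler0.
have : pi i g * pi i r = 0 by rewrite -rmorphM hgr rmorph0.
by case/hdom => // hg0; move: hg; rewrite hg0 eqxx.
Qed.

(* Choose [x0 != 0] in [e i M] and [rho] in the ideal [I] with [R x0 = I M]
   such that [pi i rho != 0]; then [rho (e i M) <= R x0] embeds [e i M] into
   [D i], with [pi i rho] in the image. *)
Lemma part_iso_nonzero_ideal i : integral_domain (D i) ->
  exists I : D i -> Prop, is_ideal I /\ nonzero_ideal I /\ iso_to_ideal (pi i) (part i) I.
Proof.
move=> hdom; have [x0 hx0 hx0n] := part_neq0 i.
have [I [_ hIx]] := hM (cyclic_submodule x0).
have [rho [hrho hrho0]] : exists rho, I rho /\ pi i rho != 0.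
  apply: NNPP => hn; move/eqP: hx0n; apply.
  apply: (ideal_times_part_eq0 (I := I)) hx0 _; last by apply/hIx; exists 1; rewrite scale1r.
  by move=> r hr; apply/eqP; apply: contraT => hr0; case: hn; exists r.
have hann s : s *: x0 = 0 -> pi i s = 0.
  move=> hs; have [//|hs0] := eqVneq (pi i s) 0.
  by case/eqP: hx0n; apply: part_torsionfree hdom hs0 hx0 hs.
have [f [hf finj fval]] := part_embedding hx0
  (fun y _ => proj2 (hIx _) (ideal_times_module_mem y hrho)) hann
  (fun y => part_torsionfree hdom hrho0).
exists (part_image f (fun _ => True)); split; last split.
- by apply: part_image_ideal hf _; split.
- by exists (pi i rho); split=> //; exists x0; split=> //; apply: fval.
- have [fD fZ] := hf; exists f; split=> // [x hx | a [x [_ hx <-]]]; first by exists x.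
  by exists x.
Qed.

(* Over a local [D i] with maximal ideal [(pi i tau)], an element of [e i M]
   outside [tau (e i M)] generates [e i M]: in [R x = I M] the ideal [pi i I]
   is not inside [(pi i tau)], so it contains [1]. *)
Lemma part_cyclic_of_not_rad i (tau : R) (x : M) :
  (forall J : D i -> Prop, is_ideal J -> ~ (forall d, J d -> principal (pi i tau) d) -> J 1) ->
  part i x -> ~ (exists y, part i y /\ x = tau *: y) ->
  forall y, part i y -> exists s, y = s *: x.
Proof.
move=> hloc hx hnx y hy.
have [I [hI hIx]] := hM (cyclic_submodule x).
have [r [hr hr1]] : exists r, I r /\ pi i r = 1.
  apply: hloc (pi_image_ideal i hI) _ => hIt; apply: hnx.
  have hxI : ideal_times_module I x by apply/hIx; exists 1; rewrite scale1r.
  have [y' [hy' hxy']] := part_ideal_times_sub hIt hxI.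
  by exists y'; split=> //; rewrite -hxy'; move/partP: hx.
have -> : y = r *: y by rewrite (part_scale_pi (s := 1) _ hy) ?scale1r // hr1 rmorph1.
by apply/hIx; apply: ideal_times_module_mem.
Qed.

(* Otherwise [e i M = tau^k (e i M)] for every [k], and [tau] is nilpotent in [D i]. *)
Lemma part_cyclic i : artinian_local_pir (D i) ->
  exists2 x0, part i x0 & forall y, part i y -> exists s, y = s *: x0.
Proof.
case=> hA [m [hm hu]] hP; have hN := pir_noetherian hP.
have [t ht] := hP m (let: And3 hmI _ _ := hm in hmI).
have [N htN] := artinian_local_gen_nilpotent hN hm hu hA ht.
have [tau htau] := pi_surj1 t.
have [[x [hx hnx]] | hall] :=
  classic (exists x, part i x /\ ~ exists y, part i y /\ x = tau *: y).
  exists x => //; apply: part_cyclic_of_not_rad hx hnx => J hJ; rewrite htau => hJt.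
  apply: (local_ideal_not_sub_max hN hu hJ) => hJm.
  by apply: hJt => d /hJm /ht.
have hk k x : part i x -> exists y, part i y /\ x = tau ^+ k *: y.
  elim: k x => [|k IH] x hx; first by exists x; rewrite expr0 scale1r.
  have [y [hy ->]] := IH x hx.
  have [y' [hy' ->]] : exists y', part i y' /\ y = tau *: y'.
    by apply: NNPP => hn; apply: hall; exists y.
  by exists y'; split=> //; rewrite scalerA exprSr.
have [x0 hx0 hx0n] := part_neq0 i.
have [y [hy hxy]] := hk N x0 hx0.
by move: hx0n; rewrite hxy (part_scale_pi0 _ hy) ?eqxx // rmorphXn htau htN.
Qed.

Lemma part_iso_ring i : artinian_local_pir (D i) -> iso_to_ideal (pi i) (part i) (fun _ => True).
Proof.
move=> /part_cyclic [x0 hx0 hcyc].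
have hann s : s *: x0 = 0 -> pi i s = 0.
  move=> hs; have hse : s * e i = 0.
    apply: hF => m; rewrite -scalerA; have [t ->] := hcyc _ (part_scaled i m).
    by rewrite scalerA mulrC -scalerA hs scaler0.
  by have := pi_mul_idem i i s; rewrite hse rmorph0 eqxx.
have hgen y : part i y -> exists s, 1 *: y = s *: x0 by rewrite scale1r; apply: hcyc.
have hinj y : part i y -> 1 *: y = 0 -> y = 0 by rewrite scale1r.
have [f [[fD fZ] finj fval]] := part_embedding hx0 hgen hann hinj.
exists f; split=> // a _; have [s hs] := pi_surj1 a.
have hy : part i (s *: x0) := submoduleZ _ (part_submodule i) hx0.
by exists (s *: x0); split=> //; rewrite -hs; apply: fval; rewrite ?scale1r.
Qed.

End FaithfulMultiplication.

End Decomposition.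

Theorem theorem1p3 (R : comPzRingType) (n : nat) (D : 'I_n -> comNzRingType)
    (pi : forall i : 'I_n, {rmorphism R -> D i})
    (pi_inj : forall x : R, (forall i, pi i x = 0) -> x = 0)
    (pi_surj : forall d : (forall i : 'I_n, D i), exists x : R, forall i, pi i x = d i)
    (hD : forall i, dedekind_domain (D i) \/ artinian_local_pir (D i))
    (e : 'I_n -> R)
    (he : forall i j : 'I_n, pi j (e i) = (if i == j then 1 else 0))
    (M : lmodType R) :
  (faithful_module M /\ multiplication_module M) <->
  (forall i : 'I_n,
     iso_to_ideal (pi i) (@scaled_part R M (e i)) (fun _ => True) \/
     (dedekind_domain (D i) /\
      exists I : D i -> Prop, is_ideal I /\ nonzero_ideal I /\
        iso_to_ideal (pi i) (@scaled_part R M (e i)) I)).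
Proof.
split.
- case=> hF hM i; case: (hD i) => hDi.
    right; split=> //; have hdom : integral_domain (D i) by case: hDi.
    exact: (part_iso_nonzero_ideal pi_inj pi_surj he hF hM hdom).
  by left; exact: (part_iso_ring pi_inj pi_surj he hF hM hDi).
- move=> hparts; apply: (faithful_multiplication_of_part_isos pi_inj pi_surj he) => i.
  case: (hparts i) => [hiso | [hDi [I [hI [hnz hiso]]]]].
    by exists (fun _ => True); split=> //; [apply: multiplication_idealT | apply: faithful_idealT].
  exists I; split=> //; first exact: dedekind_multiplication_ideal.
  by apply: domain_faithful_ideal hnz; case: hDi.
Qed.
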